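(* Consider the asynchronous communication model described in the context, and suppose that $Q(y|\star)>0$ for all $y\in\mathcal Y$. Then no asynchronism exponent strictly greater than $$\max_{x\in\mathcal X}D\big(Q(\cdot|x)\,\|\,Q(\cdot|\star)\big)$$ is achievable (at any rate $R\ge 0$).
   Context: Model. A discrete memoryless channel has finite input alphabet $\mathcal X$, finite output alphabet $\mathcal Y$, transition probabilities $Q(y|x)$, and a distinguished ''noise'' input symbol $\star\in\mathcal X$. Standing assumptions: for every $y$ there is $x$ with $Q(y|x)>0$, and the synchronized capacity $C(Q)>0$. A code consists of $M\ge2$ equally likely messages, codewords $c^N(m)\in\mathcal X^N$, and a sequential decoder. The asynchronism level is an integer $A\ge1$: the start time $\nu$ is uniform on $\{1,\dots,A\}$, independent of the message. Given message $m$ and $\nu$, outputs $Y_1,Y_2,\dots$ are independent with $Y_i\sim Q(\cdot|\star)$ if $i\le\nu-1$ or $i\ge\nu+N$, and $Y_i\sim Q(\cdot|c_{i-\nu+1}(m))$ for $\nu\le i\le\nu+N-1$. The receiver knows $A$ and the code but not $\nu$. A decoder is $(\tau,\phi)$ with $\tau$ a stopping time w.r.t. $Y_1,Y_2,\dots$ and $\phi$ a function of $Y_1,\dots,Y_\tau$ returning a message. With $\mathbb P_{m,l},\mathbb E_{m,l}$ conditioning on message $m$ and $\nu=l$: $\mathbb P(\mathcal E)=\frac1{AM}\sum_{m,l}\mathbb P_{m,l}(\phi\neq m)$, $\mathbb E(\tau-\nu)^+=\frac1{AM}\sum_{m,l}\mathbb E_{m,l}(\tau-l)^+$, rate $R=\ln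 M/\mathbb E(\tau-\nu)^+$. An asynchronism exponent $\alpha$ is achievable at rate $R$ if for every $\varepsilon>0$ there is a code with (sufficiently large) blocklength $N$ operating at asynchronism level $A=e^{(\alpha-\varepsilon)N}$ with rate at least $R-\varepsilon$ and $\mathbb P(\mathcal E)\le\varepsilon$. $D$ is Kullback–Leibler divergence. *)

From HB Require Import structures.
From mathcomp Require Import all_boot all_order all_algebra.
From mathcomp Require Import all_classical all_reals all_analysis.
Set Implicit Arguments. Unset Strict Implicit. Unset Printing Implicit Defensive.
Import Order.TTheory GRing.Theory Num.Theory.
Local Open Scope ring_scope.
Local Open Scope classical_set_scope.

Section Async.
Context {R : realType} {X Y : finType}.

(* Q x y = Q(y|x) : a stochastic matrix *)
Definition stochastic (Q : X -> Y -> R) : Prop :=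
  forall x, (forall y, 0 <= Q x y) /\ \sum_y Q x y = 1.

Definition is_distr (P : X -> R) : Prop :=
  (forall x, 0 <= P x) /\ \sum_x P x = 1.

Definition divergence (P Q : Y -> R) : \bar R :=
  if [exists y, (0 < P y) && (Q y == 0)] then +oo%E
  else (\sum_(y | 0 < P y) P y * ln (P y / Q y))%:E.

Definition mutual_info (P : X -> R) (Q : X -> Y -> R) : R :=
  \sum_x \sum_y
    (if 0 < P x * Q x y
     then P x * Q x y * ln (Q x y / \sum_(x' : X) P x' * Q x' y)
     else 0).

Definition capacity (Q : X -> Y -> R) : R :=
  sup [set r | exists P, is_distr P /\ r = mutual_info P Q].

(* A code with M messages, blocklength N, and a sequential decoder (tau, phi):
   tau = first n >= 0 such that [stop (Y_1..Y_n)], phi = [dec (Y_1..Y_tau)].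
   Every stopping time w.r.t. the natural filtration of a finite-alphabet
   process is of this form. *)
Record code (M N : nat) := Code {
  cw : 'I_M -> 'I_N -> X ;
  stop : seq Y -> bool ;
  dec : seq Y -> 'I_M }.

(* input symbol at (1-indexed) time i when the codeword c starts at time l *)
Definition input_at (N : nat) (star : X) (c : 'I_N -> X) (l i : nat) : X :=
  if (l <= i)%N then (if @insub _ (fun k => (k < N)%N) 'I_N (i - l)%N is Some j
                      then c j else star)
  else star.

(* probability of observing Y_1..Y_n = s under message m and nu = l *)
Definition pathprob (Q : X -> Y -> R) (star : X) (M N : nat) (C : code M N)
  (m : 'I_M) (l : nat) (s : seq Y) : R :=
  \prod_(p <- zip (iota 1 (size s)) s) Q (input_at star (cw C m) l p.1) p.2.

(* [tau = size s] on the output prefix s *)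
Definition firststop (M N : nat) (C : code M N) (s : seq Y) : bool :=
  stop C s && [forall k : 'I_(size s), ~~ stop C (take k s)].

Definition p_stop Q star M N (C : code M N) (m : 'I_M) (l n : nat) : R :=
  \sum_(t : n.-tuple Y | firststop C t) pathprob Q star C m l t.

Definition p_correct Q star M N (C : code M N) (m : 'I_M) (l n : nat) : R :=
  \sum_(t : n.-tuple Y | firststop C t && (dec C t == m)) pathprob Q star C m l t.

(* P_{m,l}(phi <> m): never stopping counts as an error *)
Definition err_ml Q star M N (C : code M N) (m : 'I_M) (l : nat) : \bar R :=
  (1%:E - \sum_(0 <= n <oo) (p_correct Q star C m l n)%:E)%E.

(* E_{m,l}(tau - l)^+ ; equals +oo if P_{m,l}(tau = oo) > 0 *)
Definition delay_ml Q star M N (C : code M N) (m : 'I_M) (l : nat) : \bar R :=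
  (\sum_(0 <= n <oo) (((n - l)%N)%:R * p_stop Q star C m l n)%:E
   + (if \sum_(0 <= n <oo) (p_stop Q star C m l n)%:E == 1%:E then 0 else +oo))%E.

(* P(E) and E(tau - nu)^+ at asynchronism level A (nu uniform on {1..A}) *)
Definition Perr Q star M N (C : code M N) (A : nat) : \bar R :=
  (((A * M)%:R)^-1%:E * \sum_(m < M) \sum_(1 <= l < A.+1) err_ml Q star C m l)%E.

Definition Edelay Q star M N (C : code M N) (A : nat) : \bar R :=
  (((A * M)%:R)^-1%:E * \sum_(m < M) \sum_(1 <= l < A.+1) delay_ml Q star C m l)%E.

Definition async_level (e : R) (N : nat) : nat :=
  maxn 1 (Num.truncn (expR (e * N%:R))).

Definition achievable (Q : X -> Y -> R) (star : X) (alpha Rt : R) : Prop :=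
  forall eps : R, 0 < eps -> forall N0 : nat, exists N : nat, (N0 <= N)%N /\
    exists M : nat, exists C : code M N, (2 <= M)%N /\
      let A := async_level (alpha - eps) N in
      ((Rt - eps)%:E * Edelay Q star C A <= (ln M%:R)%:E)%E /\
      (Perr Q star C A <= eps%:E)%E.

End Async.

From Pilot Require Import Defs.
From HB Require Import structures.
From mathcomp Require Import all_boot all_order all_algebra.
From mathcomp Require Import all_classical all_reals all_analysis.
From mathcomp Require Import ring lra zify.
Import Order.TTheory GRing.Theory Num.Theory.
Local Open Scope ring_scope.

(* Let P0 be the law of the outputs under pure noise and, for message m sent
   from time l, let Lr_{m,l} = dP_{m,l}/dP0 on the first L outputs. The events "the decoder
   stops within L outputs and declares m" are disjoint, so their P0-masses sum to at most 1,
   while sum_l P_{m,l}(E) = E0[1_E sum_l Lr_{m,l}]. Truncated at e^{N(D+d)}, with D the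
   largest divergence D(Q(.|x) || Q(.|star)), the ratios of non-overlapping windows are
   uncorrelated under P0, so sum_l Lr_{m,l} has P0-mean about A and variance
   O(A N e^{N(D+d)}) = o(A^2) when A = e^{alpha N} with alpha > D + 3d; Chebyshev's
   inequality for the log-likelihood ratio, whose mean is at most N D, shows that the
   truncation costs o(1). Hence sum_l P_{m,l}(correct) <= A (5/4 P0(correct) + o(1)), and
   averaging over M >= 2 messages gives P(E) >= 1/4 for all large N. *)

Section TupleSums.
Context {R : comPzSemiRingType} {Y : finType}.

Lemma sum_tuple_prod {L} (w : nat -> Y -> R) :
  \sum_(y : L.-tuple Y) \prod_(i < L) w i (tnth y i) = \prod_(i < L) \sum_u w i u.
Proof.
rewrite (bigA_distr_bigA (fun i : 'I_L => w i)) /=.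
rewrite (reindex (@finfun_of_tuple _ _)) /=; last first.
  by exists (@tuple_of_finfun _ _) => t _; [exact: finfun_of_tupleK | exact: tuple_of_finfunK].
by apply: eq_bigr => t _; apply: eq_bigr => i _; rewrite ffunE.
Qed.

Lemma prod_ord_delta {L : nat} (j : 'I_L) (F : 'I_L -> R) :
  \prod_(k < L) (if k == j then F k else 1) = F j.
Proof. by rewrite (bigD1 j) //= eqxx big1 ?mulr1 // => k /negbTE ->. Qed.

Section ProductMeasure.
Context {L : nat}.
Variable q : nat -> Y -> R.

Lemma sum_tuple_prod_weight (f : 'I_L -> Y -> R) :
  \sum_(y : L.-tuple Y) \prod_(k < L) (q k (tnth y k) * f k (tnth y k)) =
  \prod_(k < L) \sum_u q k u * f k u.
Proof.
pose w (k : nat) u := q k u * (if insub k is Some k' then f k' u else 1).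
have E (k : 'I_L) u : q k u * f k u = w k u by rewrite /w valK.
under eq_bigr do under eq_bigr do rewrite E.
rewrite sum_tuple_prod; apply: eq_bigr => k _; exact: eq_bigr.
Qed.

Hypothesis q1 : forall i, \sum_u q i u = 1.

Lemma sum_tuple_prod_take n (x : Y) (t : seq Y) : size t = n -> (n <= L)%N ->
  \sum_(y : L.-tuple Y) (take n y == t)%:R * \prod_(i < L) q i (tnth y i) =
  \prod_(i < n) q i (nth x t i).
Proof.
move=> st nL.
pose w i u := q i u * (if (i < n)%N then (u == nth x t i)%:R else 1).
have E (y : L.-tuple Y) : (take n y == t)%:R * \prod_(i < L) q i (tnth y i) =
    \prod_(i < L) w i (tnth y i).
  rewrite /w big_split /= mulrC; congr (_ * _).
  have [<-|ne] := eqVneq (take n y) t.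
    by rewrite big1 // => i _; case: ifP => // lt; rewrite (tnth_nth x) nth_take // eqxx.
  have sz : size (take n y) = size t by rewrite size_takel ?size_tuple // st.
  have [i [lti neq]] : exists i, (i < n)%N /\ nth x (take n y) i != nth x t i.
    apply/not_existsP => H; case/eqP: ne; apply: (eq_from_nth (x0 := x) sz) => i.
    rewrite sz st => lti; apply/eqP; apply: contraT => nq; exfalso; exact: (H i).
  rewrite (bigD1 (Ordinal (leq_trans lti nL))) //= lti (tnth_nth x) /=.
  by rewrite -(nth_take _ lti) (negbTE neq) mul0r.
rewrite (eq_bigr _ (fun y _ => E y)) sum_tuple_prod.
rewrite [RHS](big_ord_widen _ (fun i => q i (nth x t i)) nL) [RHS]big_mkcond /=.
apply: eq_bigr => i _; rewrite /w; case: ifP => _; last by under eq_bigr do rewrite mulr1.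
rewrite (bigD1 (nth x t i)) //= eqxx mulr1 big1 ?addr0 // => u /negbTE ->.
by rewrite mulr0.
Qed.

Lemma sum_tuple_prod_coord (j : 'I_L) (h : Y -> R) :
  \sum_(y : L.-tuple Y) (\prod_(k < L) q k (tnth y k)) * h (tnth y j) = \sum_u q j u * h u.
Proof.
pose f k u := if k == j then h u else 1.
have E y : (\prod_(k < L) q k (tnth y k)) * h (tnth y j) =
    \prod_(k < L) (q k (tnth y k) * f k (tnth y k)).
  by rewrite big_split /= -(prod_ord_delta j (fun k => h (tnth y k))).
rewrite (eq_bigr _ (fun y _ => E y)) sum_tuple_prod_weight (bigD1 j) //= [X in _ * X]big1.
  by rewrite mulr1 /f; under eq_bigr do rewrite eqxx.
by move=> k /negbTE kj; rewrite /f kj; under eq_bigr do rewrite mulr1.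
Qed.

Lemma sum_tuple_prod_coord2 (i j : 'I_L) (h h' : Y -> R) : i != j ->
  \sum_(y : L.-tuple Y) (\prod_(k < L) q k (tnth y k)) * (h (tnth y i) * h' (tnth y j)) =
  (\sum_u q i u * h u) * (\sum_u q j u * h' u).
Proof.
move=> ij; pose f k u := if k == i then h u else if k == j then h' u else 1.
have E y : (\prod_(k < L) q k (tnth y k)) * (h (tnth y i) * h' (tnth y j)) =
    \prod_(k < L) (q k (tnth y k) * f k (tnth y k)).
  rewrite big_split /=; congr (_ * _).
  rewrite (bigD1 i) //= (bigD1 j) 1?eq_sym //= /f eqxx eq_sym (negbTE ij) eqxx.
  by rewrite big1 ?mulr1 // => k /andP[/negbTE -> /negbTE ->].
have ji : j != i by rewrite eq_sym.
rewrite (eq_bigr _ (fun y _ => E y)) sum_tuple_prod_weight (bigD1 i) //= (bigD1 j) //=.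
rewrite [X in _ * (_ * X)]big1 => [|k /andP[/negbTE ki /negbTE kj]].
  by rewrite mulr1 /f eqxx (negbTE ji) eqxx.
by rewrite /f ki kj; under eq_bigr do rewrite mulr1.
Qed.

End ProductMeasure.
End TupleSums.

Lemma prod_zip_iota {R : pzSemiRingType} {T : Type} (g : nat -> T -> R) (x : T) (s : seq T) k :
  \prod_(p <- zip (iota k (size s)) s) g p.1 p.2 = \prod_(i < size s) g (k + i)%N (nth x s i).
Proof.
elim: s k => [|a s IH] k /=; first by rewrite big_nil big_ord0.
rewrite big_cons big_ord_recl /= addn0 IH; congr (_ * _).
by apply: eq_bigr => i _; rewrite /bump /= addSnnS add1n.
Qed.

Lemma sum_tuple_indicator {R : pzSemiRingType} {Y : finType} n (f : seq Y -> R) (s : seq Y) :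
  size s = n -> \sum_(t : n.-tuple Y) (s == t)%:R * f t = f s.
Proof.
move=> /eqP sz; rewrite (bigD1 (Tuple sz)) //= eqxx mul1r big1 ?addr0 // => t tn.
by case: eqP => [st|]; rewrite ?mul0r //; case/eqP: tn; apply: val_inj.
Qed.

Lemma ln_prod (R : realType) (I : Type) (r : seq I) (f : I -> R) :
  (forall i, 0 < f i) -> ln (\prod_(i <- r) f i) = \sum_(i <- r) ln (f i).
Proof.
move=> f0; elim: r => [|a r IH]; first by rewrite !big_nil ln1.
by rewrite !big_cons lnM ?posrE ?f0 ?IH //; apply: prodr_gt0 => i _; exact: f0.
Qed.

Lemma count_le_window (P : pred nat) (a w : nat) (s : seq nat) : uniq s ->
  (forall x, P x -> (a <= x < a + w)%N) -> (count P s <= w)%N.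
Proof.
move=> us Pw; rewrite -size_filter -[w in (_ <= w)%N](size_iota a).
apply: uniq_leq_size; first exact: filter_uniq.
by move=> x; rewrite mem_filter mem_iota => /andP[/Pw].
Qed.

Lemma sumr_const_index1 {R : pzSemiRingType} (n : nat) (c : R) :
  \sum_(1 <= i < n.+1) c = n%:R * c.
Proof. by rewrite sumr_const_nat subSS subn0 mulr_natl. Qed.

Lemma sum_natr_count (R : pzSemiRingType) (P : pred nat) (s : seq nat) :
  \sum_(i <- s) (P i)%:R = (count P s)%:R :> R.
Proof. by elim: s => [|a s IH]; rewrite ?big_nil // big_cons IH natrD. Qed.

Lemma nneseries_le (R : realType) (u : nat -> \bar R) (c : \bar R) :
  (forall n, (0 <= u n)%E) -> (forall k, (\sum_(0 <= i < k) u i <= c)%E) ->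
  (\sum_(0 <= i <oo) u i <= c)%E.
Proof.
move=> u0 uc; apply: lime_le; first exact: is_cvg_nneseries.
exact: nearW.
Qed.

Lemma mul_le_dev_sqr {R : realFieldType} {T A tau g : R} :
  0 < A -> 0 < tau -> 0 <= g <= 1 -> 0 <= T ->
  T * g <= A * (1 + tau) * g + (T - A) ^+ 2 / (A * tau).
Proof.
move=> A0 tau0 /andP[g0 g1] T0; have Atau : 0 < A * tau by rewrite mulr_gt0.
have dev_ge0 : 0 <= (T - A) ^+ 2 / (A * tau) by rewrite divr_ge0 ?sqr_ge0 ?ltW.
have [small|large] := lerP T (A * (1 + tau)).
  by have := ler_wpM2r g0 small; lra.
have dev : T - A <= (T - A) ^+ 2 / (A * tau).
  by rewrite ler_pdivlMr // expr2 ler_wpM2l; nra.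
have : 0 <= (T - A) * (1 - g) by rewrite mulr_ge0 //; nra.
nra.
Qed.

Lemma error_terms_le {R : realType} {D a d V : R} {N A : nat} :
  0 < d -> 0 <= V -> D + 3 * d <= a -> (0 < N)%N -> (0 < A)%N ->
  expR (a * N%:R) < 2 * A%:R -> 8 * (9 * V + 16) < N%:R * d ^+ 2 ->
  9 * (V * N%:R / (N%:R * d) ^+ 2) + 8 * N%:R * expR (N%:R * (D + d)) / A%:R <= 1 / 8.
Proof.
move=> d0 V0 Da N_gt0 A_gt0 expA large.
set u := N%:R; have u1 : 1 <= u by rewrite /u (ler_nat R 1 N).
have A0 : 0 < A%:R :> R by rewrite ltr0n.
have ud0 : 0 < u * d by rewrite mulr_gt0 //; lra.
set B := expR (u * (D + d)); have B0 : 0 < B by rewrite expR_gt0.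
have B_small : B * (u * d) ^+ 2 < 2 * A%:R.
  apply: le_lt_trans expA; apply: le_trans (_ : B * expR (u * d) ^+ 2 <= _).
    rewrite ler_pM2l // ler_pXn2r ?nnegrE ?expR_ge0 ?ltW //.
    by apply: lt_le_trans _ (expR_ge1Dx _); lra.
  rewrite /B expr2 -!expRD ler_expR [a * u]mulrC.
  nra.
have -> : V * u / (u * d) ^+ 2 = V / (u * d ^+ 2) by field; rewrite ?lt0r_neq0 //; lra.
have tail : 8 * u * B / A%:R <= 16 / (u * d ^+ 2).
  rewrite ler_pdivrMr // [X in _ <= X]mulrC mulrA ler_pdivlMr ?mulr_gt0 ?exprn_gt0 //; lra.
apply: le_trans (lerD (lexx _) tail) _.
rewrite mulrA -mulrDl ler_pdivrMr ?mulr_gt0 ?exprn_gt0 //; lra.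
Qed.

Lemma async_level_gt0 {R : realType} (e : R) N : (0 < async_level e N)%N.
Proof. exact: leq_maxl. Qed.

Lemma expR_lt_async_level {R : realType} (e : R) N :
  expR (e * N%:R) < 2 * (async_level e N)%:R.
Proof.
apply: lt_le_trans (truncnS_gt _) _.
have : (Num.truncn (expR (e * N%:R)))%:R <= (async_level e N)%:R :> R.
  by rewrite ler_nat leq_maxr.
have : 1 <= (async_level e N)%:R :> R by rewrite (ler_nat R 1) async_level_gt0.
rewrite -natr1; lra.
Qed.

Section Channel.
Context {R : realType} {X Y : finType}.
Variables (Q : X -> Y -> R) (star : X).
Hypothesis HQ : stochastic Q.
Hypothesis Qstar_gt0 : forall y, 0 < Q star y.

Lemma Q_ge0 x y : 0 <= Q x y. Proof. exact: (HQ x).1. Qed.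
Lemma sum_Q x : \sum_y Q x y = 1. Proof. exact: (HQ x).2. Qed.
Lemma Qstar_neq0 y : Q star y != 0. Proof. exact: lt0r_neq0. Qed.

Lemma card_output_gt0 : (0 < #|Y|)%N.
Proof.
rewrite lt0n; apply: contra_neq (oner_neq0 R) => /card0_eq Y0.
by rewrite -(sum_Q star) big_pred0.
Qed.

Context {M N : nat}.
Variable C : @Defs.code X Y M N.

(* Time [i] is counted from 0 here, from 1 in [input_at]. *)
Definition input (m : 'I_M) (l i : nat) : X := input_at star (cw C m) l i.+1.

Definition msg_prob {L} m l (y : L.-tuple Y) := \prod_(i < L) Q (input m l i) (tnth y i).
Definition noise_prob {L} (y : L.-tuple Y) := \prod_(i < L) Q star (tnth y i).
Definition lratio m l i u := Q (input m l i) u / Q star u.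
Definition lr {L} m l (y : L.-tuple Y) := \prod_(i < L) lratio m l i (tnth y i).

Definition decodes (m : 'I_M) (s : seq Y) := firststop C s && (dec C s == m).
(* Takes values in {0, 1}: see [firststop_take_uniq]. *)
Definition decoded {L} m (y : L.-tuple Y) : R := \sum_(n < L.+1) (decodes m (take n y))%:R.

Lemma pathprob_marginal {L} m l n (t : n.-tuple Y) : (n <= L)%N ->
  pathprob Q star C m l t = \sum_(y : L.-tuple Y) (take n y == t)%:R * msg_prob m l y.
Proof.
move=> nL; have [x _] := card_gt0P card_output_gt0.
rewrite (sum_tuple_prod_take (fun i => Q (input m l i)) (fun i => sum_Q _) n x) ?size_tuple //.
rewrite /pathprob (prod_zip_iota (fun i => Q (input_at star (cw C m) l i)) x) size_tuple.
by apply: eq_bigr => i _; rewrite add1n.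
Qed.

Lemma sum_p_correct L m l :
  \sum_(n < L.+1) p_correct Q star C m l n = \sum_(y : L.-tuple Y) msg_prob m l y * decoded m y.
Proof.
under [RHS]eq_bigr do rewrite /decoded mulr_sumr.
rewrite [RHS]exchange_big /=; apply: eq_bigr => n _.
rewrite /p_correct big_mkcond /=.
under eq_bigr => t _ do rewrite (pathprob_marginal m l _ t (ltn_ord n)) -mulrb -mulr_natl mulr_sumr.
rewrite exchange_big /=; apply: eq_bigr => y _.
have sz : size (take n y) = n by rewrite size_takel // size_tuple -ltnS.
rewrite -(sum_tuple_indicator _ (fun t => msg_prob m l y * (decodes m t)%:R) _ sz).
by apply: eq_bigr => t _; rewrite /decodes; ring.
Qed.

Lemma firststop_take_uniq {L} (y : L.-tuple Y) n n' : (n <= L)%N -> (n' <= L)%N ->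
  firststop C (take n y) -> firststop C (take n' y) -> n = n'.
Proof.
wlog nn' : n n' / (n <= n')%N.
  move=> H nL n'L f f'; have [le|/ltnW le] := leqP n n'; first exact: H.
  exact/esym/H.
move=> nL n'L /andP[s _] /andP[_ /forallP fa].
apply/eqP; rewrite eqn_leq nn' /=; apply: contraT; rewrite -ltnNge => lt.
have sz : (n < size (take n' y))%N by rewrite size_takel ?size_tuple.
by move: (fa (Ordinal sz)) => /=; rewrite take_takel ?s // ltnW.
Qed.

Lemma decoded_ge0 {L} m (y : L.-tuple Y) : 0 <= decoded m y.
Proof. by apply: sumr_ge0 => n _; rewrite ler0n. Qed.

Lemma sum_decoded_le1 {L} (y : L.-tuple Y) : \sum_(m < M) decoded m y <= 1.
Proof.
rewrite /decoded exchange_big /=.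
have E (n : 'I_L.+1) : \sum_(m < M) (decodes m (take n y))%:R = (firststop C (take n y))%:R :> R.
  rewrite /decodes; case: (firststop C _) => /=; last by rewrite big1.
  rewrite (bigD1 (dec C (take n y))) //= eqxx big1 ?addr0 // => m /negbTE.
  by rewrite eq_sym => ->.
under eq_bigr do rewrite E.
have [n0 f0|none] := pickP (fun n : 'I_L.+1 => firststop C (take n y)); last first.
  by rewrite big1 // => n _; rewrite none.
rewrite (bigD1 n0) //= f0 big1 ?addr0 // => n nn0.
case fn: (firststop C (take n y)) => //; case/eqP: nn0; apply: val_inj.
by apply: (@firststop_take_uniq _ y) => //; rewrite -ltnS ltn_ord.
Qed.

Lemma decoded_le1 {L} m (y : L.-tuple Y) : decoded m y <= 1.
Proof.
apply: le_trans (sum_decoded_le1 y); rewrite (bigD1 m) //= lerDl.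
by apply: sumr_ge0 => i _; exact: decoded_ge0.
Qed.

Lemma noise_prob_ge0 {L} (y : L.-tuple Y) : 0 <= noise_prob y.
Proof. by apply: prodr_ge0 => i _; exact: Q_ge0. Qed.

Lemma msg_prob_ge0 {L} m l (y : L.-tuple Y) : 0 <= msg_prob m l y.
Proof. by apply: prodr_ge0 => i _; exact: Q_ge0. Qed.

Lemma lratio_ge0 m l i u : 0 <= lratio m l i u.
Proof. by rewrite divr_ge0 ?Q_ge0 // ltW. Qed.

Lemma lr_ge0 {L} m l (y : L.-tuple Y) : 0 <= lr m l y.
Proof. by apply: prodr_ge0 => i _; exact: lratio_ge0. Qed.

Lemma noise_prob_lr {L} m l (y : L.-tuple Y) : noise_prob y * lr m l y = msg_prob m l y.
Proof.
rewrite -big_split; apply: eq_bigr => i _ /=.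
by rewrite mulrC divfK ?Qstar_neq0.
Qed.

Lemma sum_noise_prob L : \sum_(y : L.-tuple Y) noise_prob y = 1.
Proof. by rewrite /noise_prob (sum_tuple_prod (fun _ => Q star)) big1 // => i _; exact: sum_Q. Qed.

Lemma sum_msg_prob L m l : \sum_(y : L.-tuple Y) msg_prob m l y = 1.
Proof. by rewrite /msg_prob (sum_tuple_prod (fun i => Q (input m l i))) big1 // => i _; exact: sum_Q. Qed.

Lemma sum_noise_lr L m l : \sum_(y : L.-tuple Y) noise_prob y * lr m l y = 1.
Proof. by under eq_bigr do rewrite noise_prob_lr; exact: sum_msg_prob. Qed.

Lemma lratio_star {m l i} u : input m l i = star -> lratio m l i u = 1.
Proof. by move=> e; rewrite /lratio e divff ?Qstar_neq0. Qed.

Lemma sum_Qstar_lratio m l i : \sum_u Q star u * lratio m l i u = 1.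
Proof.
by rewrite -(sum_Q (input m l i)); apply: eq_bigr => u _; rewrite mulrC divfK ?Qstar_neq0.
Qed.

Lemma sum_noise_lr_mul L m l m' l' :
  (forall i, input m l i = star \/ input m' l' i = star) ->
  \sum_(y : L.-tuple Y) noise_prob y * (lr m l y * lr m' l' y) = 1.
Proof.
move=> H; under eq_bigr do rewrite -!big_split /=.
rewrite (sum_tuple_prod (fun i u => Q star u * (lratio m l i u * lratio m' l' i u))) big1 // => i _.
have [e|e] := H i.
  by under eq_bigr do rewrite (lratio_star _ e) mul1r; exact: sum_Qstar_lratio.
by under eq_bigr do rewrite [lratio m' _ _ _](lratio_star _ e) mulr1; exact: sum_Qstar_lratio.
Qed.

Lemma input_window m l i : input m l i != star -> (l <= i.+1 < l + N)%N.
Proof.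
rewrite /input /input_at; case: (leqP l i.+1) => li; last by rewrite eqxx.
by case: insubP => [j lt _ _ | _]; rewrite ?eqxx //=; lia.
Qed.

Definition overlap l l' := ((l < l' + N) && (l' < l + N))%N.

Lemma input_disjoint m l l' : ~~ overlap l l' ->
  forall i, input m l i = star \/ input m l' i = star.
Proof.
move=> nov i; have [->|/input_window h1] := eqVneq (input m l i) star; first by left.
have [->|/input_window h2] := eqVneq (input m l' i) star; first by right.
by move: nov; rewrite /overlap; lia.
Qed.

Lemma sum_overlap_le l A : \sum_(1 <= l' < A.+1) (overlap l l')%:R <= (2 * N)%:R :> R.
Proof.
rewrite sum_natr_count ler_nat; apply: (@count_le_window _ (l - N)); first exact: iota_uniq.
by move=> x; rewrite /overlap; lia.
Qed.

Section Truncation.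
Variables (L A : nat) (m : 'I_M) (B : R).
Hypotheses (A_gt0 : (0 < A)%N) (B_ge0 : 0 <= B).

Definition trunc_lr l (y : L.-tuple Y) := lr m l y * (lr m l y <= B)%R%:R.
Definition excess_lr l (y : L.-tuple Y) := lr m l y * (B < lr m l y)%R%:R.
Definition tail_prob l := \sum_(y : L.-tuple Y) msg_prob m l y * (B < lr m l y)%R%:R.
Definition trunc_sum y := \sum_(1 <= l < A.+1) trunc_lr l y.
Definition excess_sum y := \sum_(1 <= l < A.+1) excess_lr l y.
Definition total_tail := \sum_(1 <= l < A.+1) tail_prob l.

Lemma lr_split l y : lr m l y = trunc_lr l y + excess_lr l y.
Proof.
by rewrite /trunc_lr /excess_lr; case: (lerP (lr m l y) B) => _; rewrite ?mulr1 ?mulr0 ?addr0 ?add0r.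
Qed.

Lemma trunc_lr_ge0 l y : 0 <= trunc_lr l y.
Proof. by rewrite mulr_ge0 ?lr_ge0. Qed.

Lemma trunc_lr_le_bound l y : trunc_lr l y <= B.
Proof. by rewrite /trunc_lr; case: (lerP (lr m l y) B); rewrite ?mulr1 ?mulr0. Qed.

Lemma trunc_lr_le l y : trunc_lr l y <= lr m l y.
Proof. by rewrite /trunc_lr; case: (lerP (lr m l y) B); rewrite ?mulr1 ?mulr0 ?lr_ge0. Qed.

Lemma excess_lr_ge0 l y : 0 <= excess_lr l y.
Proof. by rewrite mulr_ge0 ?lr_ge0. Qed.

Lemma sum_noise_trunc_lr l : \sum_y noise_prob y * trunc_lr l y = 1 - tail_prob l.
Proof.
rewrite -(sum_noise_lr L m l) /tail_prob -sumrB; apply: eq_bigr => y _.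
by rewrite -noise_prob_lr -mulrA -mulrBr -/(excess_lr l y) [in RHS](lr_split l y) addrK.
Qed.

(* Likelihood ratios of non-overlapping windows are independent under noise. *)
Lemma sum_noise_trunc_lr_mul l l' :
  \sum_y noise_prob y * (trunc_lr l y * trunc_lr l' y) <= 1 + B * (overlap l l')%:R.
Proof.
case ovl: (overlap l l').
  apply: le_trans (_ : \sum_y noise_prob y * (B * lr m l' y) <= _).
    apply: ler_sum => y _; rewrite ler_wpM2l ?noise_prob_ge0 //.
    by rewrite ler_pM ?trunc_lr_ge0 ?trunc_lr_le_bound ?trunc_lr_le.
  under eq_bigr do rewrite mulrCA.
  by rewrite -mulr_sumr sum_noise_lr mulr1 addrC lerDl.
apply: le_trans (_ : \sum_y noise_prob y * (lr m l y * lr m l' y) <= _).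
  apply: ler_sum => y _; rewrite ler_wpM2l ?noise_prob_ge0 //.
  by rewrite ler_pM ?trunc_lr_ge0 ?trunc_lr_le.
by rewrite sum_noise_lr_mul ?mulr0 ?addr0 //; apply: input_disjoint; rewrite ovl.
Qed.

Lemma sum_noise_trunc_sum : \sum_y noise_prob y * trunc_sum y = A%:R - total_tail.
Proof.
under eq_bigr do rewrite /trunc_sum mulr_sumr.
rewrite exchange_big /=; under eq_bigr do rewrite sum_noise_trunc_lr.
by rewrite sumrB sumr_const_index1 mulr1.
Qed.

Lemma sum_noise_excess_sum : \sum_y noise_prob y * excess_sum y = total_tail.
Proof.
under eq_bigr do rewrite /excess_sum mulr_sumr.
rewrite exchange_big /=; apply: eq_bigr => l _; apply: eq_bigr => y _.
by rewrite mulrA noise_prob_lr.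
Qed.

Lemma sum_noise_trunc_sum_sqr :
  \sum_y noise_prob y * trunc_sum y ^+ 2 <= A%:R * (A%:R + B * (2 * N)%:R).
Proof.
have E y : noise_prob y * trunc_sum y ^+ 2 = \sum_(1 <= l < A.+1) \sum_(1 <= l' < A.+1)
    noise_prob y * (trunc_lr l y * trunc_lr l' y).
  by rewrite /trunc_sum expr2 mulr_suml mulr_sumr; apply: eq_bigr => l _; rewrite !mulr_sumr.
rewrite (eq_bigr _ (fun y _ => E y)) exchange_big -sumr_const_index1; apply: ler_sum => l _.
rewrite exchange_big /=.
apply: le_trans (_ : \sum_(1 <= l' < A.+1) (1 + B * (overlap l l')%:R) <= _).
  by apply: ler_sum => l' _; exact: sum_noise_trunc_lr_mul.
rewrite big_split /= sumr_const_index1 mulr1 -mulr_sumr lerD2l.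
by rewrite ler_wpM2l ?sum_overlap_le.
Qed.

Lemma sum_noise_trunc_dev :
  \sum_y noise_prob y * (trunc_sum y - A%:R) ^+ 2 <=
  A%:R * (B * (2 * N)%:R) + 2 * A%:R * total_tail.
Proof.
have E y : noise_prob y * (trunc_sum y - A%:R) ^+ 2 = noise_prob y * trunc_sum y ^+ 2
    - 2 * A%:R * (noise_prob y * trunc_sum y) + A%:R ^+ 2 * noise_prob y by ring.
rewrite (eq_bigr _ (fun y _ => E y)) big_split sumrB /= -!mulr_sumr.
rewrite sum_noise_prob sum_noise_trunc_sum.
by have := sum_noise_trunc_sum_sqr; nra.
Qed.

Lemma change_of_measure {tau : R} {g : L.-tuple Y -> R} :
  0 < tau -> (forall y, 0 <= g y <= 1) ->
  \sum_(1 <= l < A.+1) \sum_y msg_prob m l y * g y <=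
  A%:R * (1 + tau) * \sum_y noise_prob y * g y + total_tail
  + (B * (2 * N)%:R + 2 * total_tail) / tau.
Proof.
move=> tau0 g01; have A0 : 0 < A%:R :> R by rewrite ltr0n.
have Atau : 0 < A%:R * tau by rewrite mulr_gt0.
have E y : \sum_(1 <= l < A.+1) msg_prob m l y * g y =
    noise_prob y * ((trunc_sum y + excess_sum y) * g y).
  rewrite -big_split /= mulr_suml mulr_sumr; apply: eq_bigr => l _.
  by rewrite -lr_split -noise_prob_lr mulrA.
have pointwise y : noise_prob y * ((trunc_sum y + excess_sum y) * g y) <=
    A%:R * (1 + tau) * (noise_prob y * g y)
    + noise_prob y * (trunc_sum y - A%:R) ^+ 2 / (A%:R * tau) + noise_prob y * excess_sum y.
  have [g0 g1] := andP (g01 y).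
  have T0 : 0 <= trunc_sum y by apply: sumr_ge0 => l _; exact: trunc_lr_ge0.
  have U0 : 0 <= excess_sum y by apply: sumr_ge0 => l _; exact: excess_lr_ge0.
  have := mul_le_dev_sqr A0 tau0 (g01 y) T0.
  have := ler_piMr U0 g1; have := noise_prob_ge0 y.
  move: (noise_prob y) (trunc_sum y) (excess_sum y) => P T U P0 Ug.
  move=> dev; suff h : (T + U) * g y <= A%:R * (1 + tau) * g y + (T - A%:R) ^+ 2 / (A%:R * tau) + U.
    by have := ler_wpM2l P0 h; lra.
  by rewrite mulrDl; lra.
rewrite exchange_big /= (eq_bigr _ (fun y _ => E y)).
apply: le_trans (ler_sum _ (fun y _ => pointwise y)) _.
rewrite !big_split /= -!mulr_sumr -mulr_suml sum_noise_excess_sum.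
suff : (\sum_y noise_prob y * (trunc_sum y - A%:R) ^+ 2) / (A%:R * tau) <=
    (B * (2 * N)%:R + 2 * total_tail) / tau by lra.
rewrite ler_pdivrMr // [A%:R * tau]mulrC mulrA divfK ?lt0r_neq0 //.
by apply: le_trans sum_noise_trunc_dev _; lra.
Qed.

End Truncation.

Definition div_noise x := \sum_u Q x u * ln (Q x u / Q star u).
Definition div_noise_sqr x := \sum_u Q x u * ln (Q x u / Q star u) ^+ 2.

Lemma div_noise_star : div_noise star = 0.
Proof. by rewrite /div_noise big1 // => u _; rewrite divff ?Qstar_neq0 // ln1 mulr0. Qed.

Lemma div_noise_sqr_ge0 x : 0 <= div_noise_sqr x.
Proof. by apply: sumr_ge0 => u _; rewrite mulr_ge0 ?sqr_ge0 ?Q_ge0. Qed.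

Lemma divergence_noise x : divergence (Q x) (Q star) = (div_noise x)%:E.
Proof.
rewrite /divergence; case: existsP => [[y /andP[_ /eqP Q0]]|_].
  by have := Qstar_gt0 y; rewrite Q0 ltxx.
congr EFin; rewrite /div_noise [RHS](bigID (fun y => 0 < Q x y)) /= [X in _ = _ + X]big1 ?addr0 //.
by move=> y; rewrite ltNge negbK => Q0; rewrite (@le_anti _ _ (Q x y) 0) ?Q0 ?Q_ge0 ?mul0r.
Qed.

Lemma div_noise_sqr_le_sum x : div_noise_sqr x <= \sum_x' div_noise_sqr x'.
Proof. by rewrite (bigD1 x) //= lerDl sumr_ge0 // => x' _; exact: div_noise_sqr_ge0. Qed.

Lemma div_noise_lt_bound {alpha : R} :
  (\big[maxe/-oo]_x divergence (Q x) (Q star) < alpha%:E)%E ->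
  exists2 D, D < alpha & forall x, div_noise x <= D.
Proof.
move=> /bigmax_ltP[_ div_lt].
have lt_alpha x : div_noise x < alpha by rewrite -lte_fin -divergence_noise; exact: div_lt.
exists (\big[Num.max/0]_x div_noise x) => [|x]; last exact: le_bigmax.
by apply: bigmax_lt => [|x _]; rewrite -?div_noise_star lt_alpha.
Qed.

Section Chebyshev.
Variables (L : nat) (m : 'I_M) (l : nat) (D d V : R).
Hypotheses (div_le : forall x, div_noise x <= D) (d_gt0 : 0 < d) (N_gt0 : (0 < N)%N).
Hypothesis div_sqr_le : forall x, div_noise_sqr x <= V.

Definition llr_dev (y : L.-tuple Y) :=
  \sum_(i < L) (ln (lratio m l i (tnth y i)) - div_noise (input m l i)).

Lemma sum_active_le {c : R} : 0 <= c ->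
  \sum_(i < L) c * (input m l i != star)%:R <= c * N%:R.
Proof.
move=> c0; rewrite -mulr_sumr ler_wpM2l //.
rewrite -(big_mkord xpredT (fun i => (input m l i != star)%:R)) sum_natr_count ler_nat.
apply: (@count_le_window _ l.-1); first exact: iota_uniq.
by move=> x /input_window; lia.
Qed.

Lemma sum_div_noise_input : \sum_(i < L) div_noise (input m l i) <= D * N%:R.
Proof.
have D0 : 0 <= D by rewrite -div_noise_star.
apply: le_trans (sum_active_le D0); apply: ler_sum => i _.
by case: eqP => [->|_]; rewrite ?div_noise_star ?mulr0 ?mulr1.
Qed.

Lemma tail_indicator_le (y : L.-tuple Y) :
  (expR (N%:R * (D + d)) < lr m l y)%R%:R <= llr_dev y ^+ 2 / (N%:R * d) ^+ 2.
Proof.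
have Nd : 0 < N%:R * d by rewrite mulr_gt0 // ltr0n.
have [big|] := ltrP (expR (N%:R * (D + d))) (lr m l y); last by rewrite divr_ge0 ?sqr_ge0.
have lratio_gt0 (i : 'I_L) : 0 < lratio m l i (tnth y i).
  rewrite lt0r lratio_ge0 andbT; apply: contraTneq big => e.
  by rewrite -leNgt /lr (bigD1 i) //= e mul0r ltW // expR_gt0.
have ln_big : N%:R * (D + d) < ln (lr m l y).
  by rewrite -[X in X < _]expRK ltr_ln ?posrE ?expR_gt0 // (lt_trans (expR_gt0 _) big).
have dev_big : N%:R * d < llr_dev y.
  rewrite /llr_dev sumrB -ln_prod //; have := sum_div_noise_input; nra.
by rewrite ler_pdivlMr ?exprn_gt0 // mul1r; nra.
Qed.

Lemma sum_msg_llr_dev_sqr : \sum_y msg_prob m l y * llr_dev y ^+ 2 <= V * N%:R.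
Proof.
pose g i u := ln (lratio m l i u) - div_noise (input m l i).
have q1 i : \sum_u Q (input m l i) u = 1 := sum_Q _.
have mean0 i : \sum_u Q (input m l i) u * g i u = 0.
  by rewrite /g; under eq_bigr do rewrite mulrBr; rewrite sumrB -mulr_suml q1 mul1r subrr.
have var_le i : \sum_u Q (input m l i) u * (g i u * g i u) <= div_noise_sqr (input m l i).
  have -> : \sum_u Q (input m l i) u * (g i u * g i u) =
      div_noise_sqr (input m l i) - div_noise (input m l i) ^+ 2.
    rewrite /g /lratio /div_noise_sqr; set x := input m l i.
    transitivity (\sum_u (Q x u * ln (Q x u / Q star u) ^+ 2
        - 2 * div_noise x * (Q x u * ln (Q x u / Q star u)) + div_noise x ^+ 2 * Q x u)).
      by apply: eq_bigr => u _; ring.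
    by rewrite big_split sumrB /= -!mulr_sumr -/(div_noise x) sum_Q; ring.
  by rewrite lerBlDr lerDl sqr_ge0.
have E y : msg_prob m l y * llr_dev y ^+ 2 =
    \sum_(i < L) \sum_(j < L) msg_prob m l y * (g i (tnth y i) * g j (tnth y j)).
  by rewrite /llr_dev expr2 mulr_suml mulr_sumr; apply: eq_bigr => i _; rewrite !mulr_sumr.
have V0 : 0 <= V := le_trans (div_noise_sqr_ge0 star) (div_sqr_le star).
rewrite (eq_bigr _ (fun y _ => E y)) exchange_big /=.
apply: le_trans (sum_active_le V0); apply: ler_sum => i _.
rewrite exchange_big /= (bigD1 i) //= [X in _ + X]big1 ?addr0 => [|j ji]; last first.
  by rewrite (sum_tuple_prod_coord2 _ q1) 1?eq_sym // mean0 mul0r.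
rewrite (sum_tuple_prod_coord _ q1 i (fun u => g i u * g i u)).
case: eqP => [e|_]; last by rewrite mulr1 (le_trans (var_le i)).
rewrite mulr0 big1 // => u _.
by rewrite /g (lratio_star _ e) ln1 e div_noise_star subrr !mulr0.
Qed.

(* Chebyshev's inequality for the log-likelihood ratio, whose mean is at most [N * D]. *)
Lemma tail_prob_le : tail_prob L m (expR (N%:R * (D + d))) l <= V * N%:R / (N%:R * d) ^+ 2.
Proof.
apply: le_trans (_ : \sum_y msg_prob m l y * (llr_dev y ^+ 2 / (N%:R * d) ^+ 2) <= _).
  by apply: ler_sum => y _; rewrite ler_wpM2l ?msg_prob_ge0 ?tail_indicator_le.
under eq_bigr do rewrite mulrA.
by rewrite -mulr_suml ler_wpM2r ?invr_ge0 ?sqr_ge0 ?sum_msg_llr_dev_sqr.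
Qed.

End Chebyshev.

Lemma p_correct_ge0 m l n : 0 <= p_correct Q star C m l n.
Proof. by apply: sumr_ge0 => t _; apply: prodr_ge0 => p _; exact: Q_ge0. Qed.

Lemma sum_p_correct_le1 L m l : \sum_(n < L.+1) p_correct Q star C m l n <= 1.
Proof.
rewrite sum_p_correct -(sum_msg_prob L m l); apply: ler_sum => y _.
by rewrite ler_piMr ?msg_prob_ge0 ?decoded_le1.
Qed.

Section CorrectDecodingBound.
Variables (A L : nat) (D d V : R).
Hypotheses (A_gt0 : (0 < A)%N) (d_gt0 : 0 < d) (N_gt0 : (0 < N)%N).
Hypotheses (div_le : forall x, div_noise x <= D) (div_sqr_le : forall x, div_noise_sqr x <= V).

Lemma sum_p_correct_msg_le m :
  \sum_(1 <= l < A.+1) \sum_(n < L.+1) p_correct Q star C m l n <=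
  A%:R * (5 / 4) * \sum_(y : L.-tuple Y) noise_prob y * decoded m y
  + 9 * (A%:R * (V * N%:R / (N%:R * d) ^+ 2)) + 8 * N%:R * expR (N%:R * (D + d)).
Proof.
set B := expR (N%:R * (D + d)); have B0 : 0 <= B by rewrite ltW ?expR_gt0.
under eq_bigr do rewrite sum_p_correct.
have tau0 : 0 < 1 / 4 :> R by [].
have g01 (y : L.-tuple Y) : 0 <= decoded m y <= 1 by rewrite decoded_ge0 decoded_le1.
apply: le_trans (change_of_measure L A m B A_gt0 B0 tau0 g01) _.
have tail_le : total_tail L A m B <= A%:R * (V * N%:R / (N%:R * d) ^+ 2).
  by rewrite -sumr_const_index1; apply: ler_sum => l _; apply: tail_prob_le.
have tail0 : 0 <= total_tail L A m B.
  by apply: sumr_ge0 => l _; apply: sumr_ge0 => y _; rewrite mulr_ge0 ?msg_prob_ge0.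
rewrite natrM; move: (total_tail _ _ _ _) tail_le tail0 => t tle t0.
have -> : (B * (2%:R * N%:R) + 2 * t) / (1 / 4) = 8 * N%:R * B + 8 * t by field.
have -> : 1 + 1 / 4 = 5 / 4 :> R by field.
by rewrite -!addrA lerD2l; lra.
Qed.

Lemma sum_p_correct_le : (2 <= M)%N ->
  \sum_(m < M) \sum_(1 <= l < A.+1) \sum_(n < L.+1) p_correct Q star C m l n <=
  A%:R * M%:R * (5 / 8 + 9 * (V * N%:R / (N%:R * d) ^+ 2)
                 + 8 * N%:R * expR (N%:R * (D + d)) / A%:R).
Proof.
move=> M_ge2; have M2 : 2 <= M%:R :> R by rewrite (ler_nat R 2 M).
have A0 : 0 < A%:R :> R by rewrite ltr0n.
apply: le_trans (ler_sum _ (fun m _ => sum_p_correct_msg_le m)) _.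
set beta := V * N%:R / _; set B := expR _.
have -> : A%:R * M%:R * (5 / 8 + 9 * beta + 8 * N%:R * B / A%:R) =
    A%:R * M%:R * (5 / 8) + 9 * (A%:R * beta) * M%:R + 8 * N%:R * B * M%:R.
  by field; rewrite lt0r_neq0.
rewrite !big_split /= -mulr_sumr !sumr_const card_ord.
rewrite -[9 * _ *+ M]mulr_natr -[8 * _ * _ *+ M]mulr_natr !lerD2r.
have decoded_mass : \sum_(m < M) \sum_(y : L.-tuple Y) noise_prob y * decoded m y <= 1.
  rewrite exchange_big /= -(sum_noise_prob L); apply: ler_sum => y _.
  by rewrite -mulr_sumr ler_piMr ?noise_prob_ge0 ?sum_decoded_le1.
have mass : 5 / 4 * \sum_(m < M) \sum_(y : L.-tuple Y) noise_prob y * decoded m y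
    <= M%:R * (5 / 8).
  by apply: le_trans (ler_wpM2l (_ : 0 <= 5 / 4) decoded_mass) _; lra.
by rewrite -!mulrA ler_pM2l // mulrA.
Qed.

End CorrectDecodingBound.

Lemma p_correct_series_le1 m l :
  (\sum_(0 <= n <oo) (p_correct Q star C m l n)%:E <= 1%:E)%E.
Proof.
apply: nneseries_le => [n|k]; first by rewrite lee_fin p_correct_ge0.
case: k => [|k]; first by rewrite big_geq.
by rewrite sumEFin big_mkord lee_fin sum_p_correct_le1.
Qed.

Lemma Perr_ge (A : nat) (c : R) : (0 < A)%N -> (0 < M)%N ->
  (forall L, \sum_(m < M) \sum_(1 <= l < A.+1) \sum_(n < L.+1) p_correct Q star C m l n
             <= A%:R * M%:R * c) ->
  ((1 - c)%:E <= Perr Q star C A)%E.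
Proof.
move=> A_gt0 M_gt0 partial_le.
have p0 m l n : (0 <= (p_correct Q star C m l n)%:E)%E by rewrite lee_fin p_correct_ge0.
pose s m l := fine (\sum_(0 <= n <oo) (p_correct Q star C m l n)%:E)%E.
have sE m l : (s m l)%:E = (\sum_(0 <= n <oo) (p_correct Q star C m l n)%:E)%E.
  rewrite fineK // ge0_fin_numE; last by apply: nneseries_ge0 => n _ _.
  exact: le_lt_trans (p_correct_series_le1 m l) (ltry 1).
have total_le : \sum_(m < M) \sum_(1 <= l < A.+1) s m l <= A%:R * M%:R * c.
  rewrite -lee_fin -sumEFin; under eq_bigr do rewrite -sumEFin.
  under eq_bigr do under eq_bigr do rewrite sE.
  under eq_bigr do rewrite -(nneseries_sum _ _ (fun l n _ => p0 _ l n)).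
  rewrite -(nneseries_sum _ _ (fun m n _ => sume_ge0 (fun l _ => p0 m l n) _)).
  apply: nneseries_le => [n|[|k]].
  - by apply: sume_ge0 => m _; apply: sume_ge0.
  - have := partial_le 0%N; rewrite big_geq // lee_fin; apply: le_trans.
    by apply: sumr_ge0 => m _; apply: sumr_ge0 => l _; rewrite big_ord1 p_correct_ge0.
  - under eq_bigr do under eq_bigr do rewrite sumEFin.
    under eq_bigr do rewrite sumEFin.
    rewrite sumEFin lee_fin big_mkord exchange_big /=.
    by under eq_bigr do rewrite exchange_big /=; exact: partial_le.
have AM0 : 0 < A%:R * M%:R :> R by rewrite mulr_gt0 ?ltr0n.
rewrite /Perr /err_ml.
under eq_bigr do under eq_bigr do rewrite -sE -EFinB.
under eq_bigr do rewrite sumEFin.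
rewrite sumEFin -EFinM lee_fin natrM.
under eq_bigr do rewrite sumrB sumr_const_nat subSS subn0.
rewrite sumrB sumr_const card_ord -[A%:R *+ M]mulr_natr mulrBr mulVf ?lt0r_neq0 //.
by rewrite lerD2l lerN2 mulrC ler_pdivrMr // mulrC.
Qed.

Lemma Perr_ge_quarter {A : nat} {D d V a : R} :
  (forall x, div_noise x <= D) -> (forall x, div_noise_sqr x <= V) ->
  0 < d -> D + 3 * d <= a -> (0 < N)%N -> (0 < A)%N -> (2 <= M)%N ->
  expR (a * N%:R) < 2 * A%:R -> 8 * (9 * V + 16) < N%:R * d ^+ 2 ->
  ((1 / 4)%:E <= Perr Q star C A)%E.
Proof.
move=> div_le div_sqr_le d_gt0 Da N_gt0 A_gt0 M_ge2 expA N_big.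
have V0 : 0 <= V := le_trans (div_noise_sqr_ge0 star) (div_sqr_le star).
have small := error_terms_le d_gt0 V0 Da N_gt0 A_gt0 expA N_big.
rewrite (_ : 1 / 4 = 1 - 3 / 4); last by field.
apply: Perr_ge (ltnW M_ge2) _ => // L.
apply: le_trans (sum_p_correct_le A L D d V A_gt0 d_gt0 N_gt0 div_le div_sqr_le M_ge2) _.
by rewrite ler_wpM2l ?mulr_ge0 //; lra.
Qed.

End Channel.

Theorem proposition1 (R : realType) (X Y : finType) (Q : X -> Y -> R) (star : X)
  (HQ : stochastic Q)
  (Hcov : forall y : Y, exists x : X, 0 < Q x y)
  (Hcap : 0 < capacity Q)
  (Hstar : forall y : Y, 0 < Q star y)
  (Rt : R) (HRt : 0 <= Rt) (alpha : R)
  (Halpha : (\big[maxe/-oo]_(x : X) divergence (Q x) (Q star) < alpha%:E)%E) :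
  ~ achievable Q star alpha Rt.
Proof.
move=> achv.
have [D D_lt div_le] := div_noise_lt_bound Q star HQ Hstar Halpha.
pose d := (alpha - D) / 4; have d_gt0 : 0 < d by rewrite divr_gt0 // subr_gt0.
pose eps := Num.min d (1 / 8); pose V := \sum_x div_noise_sqr Q star x.
have eps_gt0 : 0 < eps by rewrite lt_min d_gt0 /=; lra.
have [N [N_large [M [C [M_ge2 [_ Perr_le]]]]]] :=
  achv eps eps_gt0 (Num.truncn (8 * (9 * V + 16) / d ^+ 2)).+1.
have N_gt0 : (0 < N)%N by apply: leq_trans N_large.
have N_big : 8 * (9 * V + 16) < N%:R * d ^+ 2.
  rewrite -ltr_pdivrMr ?exprn_gt0 //; apply: lt_le_trans (truncnS_gt _) _.
  by rewrite ler_nat.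
have Da : D + 3 * d <= alpha - eps.
  have : eps <= d by rewrite ge_min lexx.
  have : 4 * d = alpha - D by rewrite /d; field.
  lra.
have := Perr_ge_quarter Q star HQ Hstar C div_le (div_noise_sqr_le_sum Q star HQ) d_gt0 Da N_gt0
  (async_level_gt0 _ _) M_ge2 (expR_lt_async_level _ _) N_big.
move=> /le_trans /(_ Perr_le); rewrite lee_fin.
have : eps <= 1 / 8 by rewrite ge_min lexx orbT.
lra.
Qed.
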